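(* (i) Let $r\geq 3$, let $p_1,\dots,p_r$ be distinct odd primes, $n=p_1\cdots p_r$ and $D=\{p_1,\dots,p_r\}$. Then the circulant graph $G(n;S)$ with $S=\bigcup_{d\in D}G_n(d)$ has diameter $2$. (ii) Let $p_1,\dots,p_r$ be distinct odd primes, $m=p_1\cdots p_r$, $n=2m^2$ and $D=\{(m/p_1)^2,\dots,(m/p_r)^2\}$. Then the circulant graph $G(n;S)$ with $S=\bigcup_{d\in D}G_n(d)$ has diameter $2r+1$.
   Context: For a divisor $d$ of $n$, $G_n(d)=\{k : 1\le k\le n-1,\ \gcd(k,n)=d\}$. For a set $S\subseteq\{1,\dots,n-1\}$ with $s\in S$ iff $n-s\in S$, the circulant graph $G(n;S)$ is the undirected graph on vertex set $\mathbb{Z}_n$ in which $i$ and $j$ are adjacent iff $i-j \bmod n\in S$. The diameter is the maximum over vertex pairs of the shortest-path distance. *)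

From mathcomp Require Import all_boot.
Set Implicit Arguments. Unset Strict Implicit. Unset Printing Implicit Defensive.

Definition Gn (n d k : nat) : bool := (0 < k < n) && (gcdn k n == d).

Definition Sunion (n : nat) (D : seq nat) (k : nat) : bool :=
  has (fun d => Gn n d k) D.

(* Circulant graph G(n;S) on vertex set Z_n = {0,...,n-1}:
   i ~ j iff (i - j) mod n lies in S. *)
Definition circ_adj (n : nat) (S : pred nat) (i j : nat) : bool :=
  S ((i + (n - j)) %% n).

Definition walk (n : nat) (S : pred nat) (k i j : nat) : Prop :=
  exists s : seq nat, [/\ size s = k, all (fun v => v < n) s,
                          path (circ_adj n S) i s & last i s = j].

Definition is_dist (n : nat) (S : pred nat) (i j k : nat) : Prop :=
  walk n S k i j /\ (forall l, l < k -> ~ walk n S l i j).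

Definition has_diameter (n : nat) (S : pred nat) (d : nat) : Prop :=
  (forall i j, i < n -> j < n -> exists2 k, k <= d & is_dist n S i j k) /\
  (exists i j, [/\ i < n, j < n & is_dist n S i j d]).

(* A walk of length k from i to j in G(n;S) is a k-term sum of elements of S congruent
   to i - j mod n, so G(n;S) has diameter d as soon as every residue is a sum of at most
   d elements of S while some residue is not a sum of fewer.
   (i) For n = p_1...p_r, an element of G_n(q) is a residue whose only prime divisor
   among the p_i is q.  By the Chinese remainder theorem every x is a + b with a in G_n(q1)
   and b in G_n(q2), where q1 = q2 divides x if some p_i does, and q1 <> q2 otherwise; at
   the remaining primes p >= 3 one picks a mod p different from 0 and from x.  Since 1 is
   not in S, the diameter is 2.
   (ii) For n = 2m^2, the elements of G_n((m/q)^2) are the odd residues prime to q and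
   divisible by (m/q)^2; modulo q^2 they take every value prime to q, and modulo p^2 they
   vanish for p <> q.  Two of them reach any residue mod q^2, so two terms from each class
   reach every even residue mod n (a sum of 2r odd terms is even), and one more term every
   odd one.  Conversely a sum congruent to m needs at
   least two terms prime to q for each q (as q divides m but q^2 does not), and an odd
   number of odd terms: at least 2r + 1. *)

From mathcomp Require Import all_boot.
From Stdlib Require Import Classical.
Set Implicit Arguments. Unset Strict Implicit. Unset Printing Implicit Defensive.

Lemma eqn_mod_subr n a b c : b <= n ->
  (a + (n - b) == c %[mod n]) = (b + c == a %[mod n]).
Proof. by move=> le_bn; rewrite -(eqn_modDl b) addnCA subnKC // modnDr eq_sym. Qed.

Lemma dvdn_summand_mod p a b x : a + b = x %[mod p] -> (p %| b) = (a == x %[mod p]).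
Proof. by move=> <-; rewrite -{1}[a]addn0 eqn_modDl mod0n eq_sym. Qed.

Lemma gcdn_mul_coprime_eq k a b : coprime a b ->
  (gcdn k (a * b) == a) = (a %| k) && coprime k b.
Proof.
move=> cop_ab; apply/eqP/andP => [gcd_a | [dvd_ak cop_kb]].
  have dvd_ak : a %| k by rewrite -gcd_a dvdn_gcdl.
  split=> //; rewrite /coprime -dvdn1 -(eqP cop_ab) dvdn_gcd dvdn_gcdr andbT.
  by rewrite -gcd_a dvdn_gcd dvdn_gcdl dvdn_mull ?dvdn_gcdr.
by rewrite Gauss_gcdl //; apply/gcdn_idPr.
Qed.

Lemma prime_dvd_prod p qs : prime p -> all prime qs ->
  (p %| \prod_(q <- qs) q) = (p \in qs).
Proof.
move=> p_pr /allP qs_pr; rewrite Euclid_dvd_prod // big_has -has_pred1.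
by apply: eq_in_has => q /qs_pr q_pr; rewrite /= dvdn_prime2.
Qed.

Lemma coprime_prod_primes k qs (P : pred nat) : all prime qs ->
  coprime k (\prod_(q <- qs | P q) q) = all (fun q => P q ==> ~~ (q %| k)) qs.
Proof.
elim: qs => [|q qs IHqs] /=; first by rewrite big_nil coprimen1.
case/andP=> q_pr qs_pr; rewrite big_cons -IHqs //.
by case: (P q) => //=; rewrite coprimeMr coprime_sym prime_coprime.
Qed.

Lemma prod_primes_gt0 qs : all prime qs -> 0 < \prod_(q <- qs) q.
Proof.
by move=> /allP qs_pr; rewrite big_seq_cond prodn_cond_gt0 // => q /andP[/qs_pr/prime_gt0].
Qed.

Lemma odd_prod qs (P : pred nat) : all odd qs -> odd (\prod_(q <- qs | P q) q).
Proof.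
move=> /allP qs_odd; rewrite big_seq_cond.
apply: (big_ind (fun k => odd k)) => // [a b odd_a odd_b | q /andP[/qs_odd //]].
by rewrite oddM odd_a.
Qed.

Lemma eqn_mod_prod_primes_exp qs e a b : uniq qs -> all prime qs ->
  (forall q, q \in qs -> a = b %[mod q ^ e]) -> a = b %[mod (\prod_(q <- qs) q) ^ e].
Proof.
elim: qs => [|q qs IHqs] /=; first by rewrite big_nil exp1n !modn1.
case/andP=> qNqs qs_uniq /andP[q_pr qs_pr] eq_ab.
have cop : coprime (q ^ e) ((\prod_(p <- qs) p) ^ e).
  by apply/coprimeXl/coprimeXr; rewrite prime_coprime // prime_dvd_prod.
rewrite big_cons expnMn; apply/eqP; rewrite chinese_remainder // eq_ab ?mem_head //=.
by rewrite eqxx; apply/eqP; apply: IHqs => // p p_qs; apply: eq_ab; rewrite in_cons p_qs orbT.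
Qed.

Lemma chinese_prod_primes qs (f : nat -> nat) : uniq qs -> all prime qs ->
  exists y, forall q, q \in qs -> y = f q %[mod q].
Proof.
elim: qs => [|q qs IHqs] /=; first by exists 0.
case/andP=> qNqs qs_uniq /andP[q_pr qs_pr]; have [y y_f] := IHqs qs_uniq qs_pr.
have cop : coprime q (\prod_(p <- qs) p) by rewrite prime_coprime // prime_dvd_prod.
exists (chinese q (\prod_(p <- qs) p) (f q) y) => p; rewrite in_cons.
case/predU1P=> [-> | p_qs]; first exact: chinese_modl.
have dvd_p : p %| \prod_(p <- qs) p by rewrite prime_dvd_prod //; apply: (allP qs_pr).
by rewrite -(modn_dvdm _ dvd_p) chinese_modr // modn_dvdm // y_f.
Qed.

Definition cofactor (qs : seq nat) (q : nat) := \prod_(p <- qs | p != q) p.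

Lemma prod_cofactor qs q : uniq qs -> q \in qs -> \prod_(p <- qs) p = q * cofactor qs q.
Proof. by move=> qs_uniq q_qs; rewrite (bigD1_seq q). Qed.

Lemma coprime_cofactor qs q : all prime qs -> prime q -> coprime q (cofactor qs q).
Proof.
move=> qs_pr q_pr; rewrite /cofactor coprime_prod_primes //; apply/allP => p p_qs.
by rewrite dvdn_prime2 ?implybb //; apply: (allP qs_pr).
Qed.

Lemma dvdn_cofactor qs q p : p \in qs -> p != q -> p %| cofactor qs q.
Proof. by move=> p_qs neq_pq; rewrite /cofactor (big_rem p) //= neq_pq dvdn_mulr. Qed.

Lemma odd_prime_gt2 p : prime p -> odd p -> 2 < p.
Proof.
by move=> p_pr odd_p; rewrite ltn_neqAle prime_gt1 // andbT; apply: contraTneq odd_p => <-.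
Qed.

Definition avoid_residue (p x : nat) := if x == 1 %[mod p] then 2 else 1.

Lemma avoid_residueP p x : 2 < p ->
  ~~ (p %| avoid_residue p x) /\ (avoid_residue p x != x %[mod p]).
Proof.
move=> gt2p; rewrite /avoid_residue; case: ifP => [/eqP-> | /negbT neq_x1].
  by rewrite gtnNdvd // !modn_small // (ltn_trans _ gt2p).
by rewrite gtnNdvd ?(ltn_trans _ gt2p) // eq_sym.
Qed.

Lemma sum_two_nonmultiples q N y : 2 < q -> 0 < N -> q %| N ->
  exists u v, [/\ ~~ (q %| u), ~~ (q %| v) & u + v = y %[mod N]].
Proof.
move=> gt2q N_gt0 dvd_qN; have [Ndvd_qu neq_uy] := avoid_residueP y gt2q.
set u := avoid_residue q y in Ndvd_qu neq_uy.
have le_uN : u <= N.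
  apply: leq_trans (dvdn_leq N_gt0 dvd_qN); rewrite /u /avoid_residue.
  by case: ifP => _; rewrite ltnW // (ltn_trans _ gt2q).
have sum_uv : u + (y + (N - u)) = y + N by rewrite addnCA (subnKC le_uN).
have sum_uv_q : u + (y + (N - u)) = y %[mod q].
  by rewrite sum_uv -(modn_dvdm (y + N) dvd_qN) modnDr modn_dvdm.
exists u, (y + (N - u)); split=> //; last by rewrite sum_uv modnDr.
by rewrite (dvdn_summand_mod sum_uv_q).
Qed.

Lemma odd_sumn ss : all odd ss -> odd (sumn ss) = odd (size ss).
Proof. by elim: ss => //= s ss IHss /andP[odd_s /IHss]; rewrite oddD odd_s => ->. Qed.

Lemma sum_count_eq1 (T : Type) (U : eqType) (qs : seq T) (ss : seq U) (P : T -> U -> bool) :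
  {in ss, forall s, count (P^~ s) qs = 1} -> \sum_(q <- qs) count (P q) ss = size ss.
Proof.
move=> count1.
transitivity (\sum_(s <- ss) \sum_(q <- qs) (if P q s then 1 else 0)).
  by rewrite exchange_big; apply: eq_bigr => q _; rewrite -big_mkcond sum1_count.
rewrite -sum1_size !big_seq; apply: eq_bigr => s s_ss.
by rewrite -big_mkcond sum1_count count1.
Qed.

Lemma Sunion_lt n D s : Sunion n D s -> s < n.
Proof. by case/hasP=> d _ /andP[/andP[_ ->]]. Qed.

Section Circulant.

Variables (n : nat) (S : pred nat).
Hypotheses (n_gt0 : 0 < n) (S_lt : forall s, S s -> s < n).

Lemma walk_sumnP k i j : i < n -> j < n ->
  walk n S k i j <-> exists ss, [/\ size ss = k, all S ss & j + sumn ss = i %[mod n]].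
Proof.
move=> lt_in lt_jn; split.
  case=> vs [<- + + <-] {j lt_jn}; elim: vs i {lt_in} => [|v vs IHvs] i /=.
    by exists [::]; rewrite addn0.
  case/andP=> lt_vn lt_vs /andP[Siv /(IHvs _ lt_vs) [ss [size_ss Sss sum_ss]]].
  exists ((i + (n - v)) %% n :: ss); split=> /=; [by rewrite size_ss | exact/andP |].
  rewrite addnCA -modnDmr sum_ss modnDmr modnDml -addnA (subnK (ltnW lt_vn)).
  exact: modnDr.
elim: k i lt_in => [|k IHk] i lt_in [ss [size_ss Sss sum_ss]].
  case: ss size_ss Sss sum_ss => // _ _; rewrite addn0 !modn_small // => ->.
  by exists [::].
case: ss size_ss Sss sum_ss => [|s ss] // [size_ss] /andP[Ss Sss] /= sum_ss.
have lt_sn := S_lt Ss.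
set v := (i + (n - s)) %% n.
have lt_vn : v < n by rewrite ltn_pmod.
have [|vs [size_vs lt_vs path_vs last_vs]] := IHk v lt_vn.
  exists ss; split=> //; apply/eqP.
  by rewrite modn_mod eq_sym (eqn_mod_subr _ _ (ltnW lt_sn)) addnCA sum_ss.
exists (v :: vs); split=> //=; [by rewrite size_vs | by rewrite lt_vn | ].
have step : (i + (n - v)) %% n = s.
  rewrite -[RHS](modn_small lt_sn); apply/eqP.
  by rewrite (eqn_mod_subr _ _ (ltnW lt_vn)) modnDml -addnA (subnK (ltnW lt_sn)) modnDr.
by rewrite /circ_adj step Ss path_vs.
Qed.

Lemma walk_is_dist k i j : walk n S k i j -> exists2 l, l <= k & is_dist n S i j l.
Proof.
elim/ltn_ind: k => k IHk walk_k.
have [[l [lt_lk walk_l]] | no_shorter] := classic (exists l, l < k /\ walk n S l i j).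
  have [l' le_l'l dist_l'] := IHk l lt_lk walk_l.
  by exists l' => //; apply: leq_trans le_l'l (ltnW lt_lk).
by exists k => //; split=> // l lt_lk walk_l; apply: no_shorter; exists l.
Qed.

Lemma circulant_has_diameter d x0 :
    (forall x, exists ss, [/\ size ss <= d, all S ss & sumn ss = x %[mod n]]) ->
    (forall ss, all S ss -> sumn ss = x0 %[mod n] -> d <= size ss) ->
  has_diameter n S d.
Proof.
move=> sum_le_d sum_x0_ge_d.
have walk_le_d i j : i < n -> j < n -> exists2 k, k <= d & walk n S k i j.
  move=> lt_in lt_jn; have [ss [size_ss Sss sum_ss]] := sum_le_d ((i + (n - j)) %% n).
  exists (size ss) => //; apply/walk_sumnP => //; exists ss; split=> //.
  rewrite -modnDmr sum_ss modnDmr; apply/eqP.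
  by rewrite -(eqn_mod_subr _ _ (ltnW lt_jn)) modn_mod.
have walk_x0_ge_d k : walk n S k (x0 %% n) 0 -> d <= k.
  case/walk_sumnP => [||ss [<- Sss]]; rewrite ?ltn_pmod // add0n modn_mod.
  exact: sum_x0_ge_d.
split=> [i j lt_in lt_jn | ].
  have [k le_kd /walk_is_dist [l le_lk dist_l]] := walk_le_d i j lt_in lt_jn.
  by exists l => //; apply: leq_trans le_lk le_kd.
have lt_x0n : x0 %% n < n by rewrite ltn_pmod.
have [k le_kd walk_k] := walk_le_d _ _ lt_x0n n_gt0.
have eq_kd : k = d by apply/eqP; rewrite eqn_leq le_kd walk_x0_ge_d.
exists (x0 %% n), 0; split=> //; split=> [|l lt_ld /walk_x0_ge_d]; first by rewrite -eq_kd.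
by rewrite leqNgt lt_ld.
Qed.

End Circulant.

Section SquarefreeModulus.

Variable ps : seq nat.
Hypotheses (ps_uniq : uniq ps) (ps_prime : all prime ps) (ps_odd : all odd ps).
Hypothesis ps_size : 1 < size ps.

Local Notation n := (\prod_(p <- ps) p).
Local Notation S := (Sunion n ps).

Let n_gt0 : 0 < n. Proof. exact: prod_primes_gt0. Qed.

Lemma Gn_squarefree q k : q \in ps -> k < n ->
  {in ps, forall p, (p %| k) = (p == q)} -> Gn n q k.
Proof.
move=> q_ps lt_kn dvd_k; have q_pr : prime q := allP ps_prime q q_ps.
have [p p_ps neq_pq] : exists2 p, p \in ps & p != q.
  apply/hasP; apply: contraLR ps_size => /hasPn eq_q; rewrite -leqNgt.
  by apply: (uniq_leq_size (s2 := [:: q])) => // p /eq_q /negPn; rewrite inE.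
rewrite /Gn lt_kn andbT (prod_cofactor ps_uniq q_ps) gcdn_mul_coprime_eq.
  rewrite lt0n dvd_k ?eqxx //=; apply/andP; split.
    by apply: contra neq_pq => /eqP k0; rewrite -dvd_k // k0 dvdn0.
  rewrite /cofactor (@coprime_prod_primes k ps (fun p => p != q)) //; apply/allP => r r_ps.
  by apply/implyP => neq_rq; rewrite dvd_k // (negbTE neq_rq).
exact: coprime_cofactor.
Qed.

Lemma Gn_squarefree_sum q1 q2 x : q1 \in ps -> q2 \in ps ->
    (q1 %| x) = (q1 == q2) -> (q2 %| x) = (q1 == q2) ->
  exists a b, [/\ Gn n q1 a, Gn n q2 b & a + b = x %[mod n]].
Proof.
move=> q1_ps q2_ps dvd_q1x dvd_q2x.
pose f p := if p == q1 then 0 else if p == q2 then x else avoid_residue p x.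
have [y y_f] := chinese_prod_primes f ps_uniq ps_prime.
set a := y %% n; set b := (x + (n - a)) %% n.
have lt_an : a < n by rewrite ltn_pmod.
have sum_ab : a + b = x %[mod n].
  by apply/eqP; rewrite -eqn_mod_subr ?modn_mod // ltnW.
have dvd_pn p : p \in ps -> p %| n by move=> p_ps; rewrite prime_dvd_prod // (allP ps_prime).
have dvd_pa p : p \in ps -> (p %| a) = (p %| f p).
  by move=> p_ps; rewrite /dvdn -y_f // modn_dvdm // dvd_pn.
have dvd_pb p : p \in ps -> (p %| b) = (f p == x %[mod p]).
  move=> p_ps; rewrite -y_f // -(modn_dvdm y (dvd_pn p p_ps)) -/a.
  apply: dvdn_summand_mod.
  by rewrite -(modn_dvdm (a + b) (dvd_pn p p_ps)) sum_ab modn_dvdm ?dvd_pn.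
have avoid p : p \in ps -> p != q1 -> p != q2 ->
    ~~ (p %| f p) /\ (f p != x %[mod p]).
  move=> p_ps /negbTE neq_pq1 /negbTE neq_pq2; rewrite /f neq_pq1 neq_pq2.
  by apply/avoid_residueP/odd_prime_gt2; [apply: (allP ps_prime) | apply: (allP ps_odd)].
exists a, b; split=> //; apply: Gn_squarefree => //; try exact: ltn_pmod.
  move=> p p_ps; rewrite dvd_pa //; case: (eqVneq p q1) => [-> | neq_pq1].
    by rewrite /f eqxx dvdn0.
  case: (eqVneq p q2) => [eq_pq2 | neq_pq2].
    by rewrite /f (negbTE neq_pq1) eq_pq2 eqxx dvd_q2x eq_sym -eq_pq2 (negbTE neq_pq1).
  by have [/negbTE] := avoid p p_ps neq_pq1 neq_pq2.
move=> p p_ps; rewrite dvd_pb //; case: (eqVneq p q2) => [-> | neq_pq2].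
  rewrite /f; case: (eqVneq q2 q1) => [eq_q21 | _]; last by rewrite (eqxx q2) eqxx.
  by rewrite mod0n eq_sym -/(dvdn _ _) dvd_q2x eq_q21 eqxx.
case: (eqVneq p q1) => [eq_pq1 | neq_pq1].
  by rewrite /f eq_pq1 (eqxx q1) mod0n eq_sym -/(dvdn _ _) dvd_q1x -eq_pq1 (negbTE neq_pq2).
by have [_ /negbTE] := avoid p p_ps neq_pq1 neq_pq2.
Qed.

Lemma sum_two_squarefree x : exists a b, [/\ S a, S b & a + b = x %[mod n]].
Proof.
have [q1 [q2 [q1_ps q2_ps dvd_q1x dvd_q2x]]] : exists q1 q2, [/\ q1 \in ps, q2 \in ps,
    (q1 %| x) = (q1 == q2) & (q2 %| x) = (q1 == q2)].
  case: (boolP (has (dvdn^~ x) ps)) => [/hasP[q q_ps dvd_qx] | /hasPn Ndvd_x].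
    by exists q, q; rewrite eqxx dvd_qx.
  move: ps_uniq ps_size Ndvd_x; case: ps => [|q1 [|q2 qs]] //= /andP[q1Nq2qs _] _ Ndvd_x.
  have neq_q12 : q1 != q2 by apply: contraNneq q1Nq2qs => ->; rewrite mem_head.
  have q1_in : q1 \in [:: q1, q2 & qs] := mem_head _ _.
  have q2_in : q2 \in [:: q1, q2 & qs] by rewrite in_cons mem_head orbT.
  exists q1, q2.
  by rewrite (negbTE neq_q12) (negbTE (Ndvd_x _ q1_in)) (negbTE (Ndvd_x _ q2_in)).
have [a [b [Ga Gb sum_ab]]] := Gn_squarefree_sum q1_ps q2_ps dvd_q1x dvd_q2x.
by exists a, b; split=> //; apply/hasP; [exists q1 | exists q2].
Qed.

Lemma diameter_squarefree : has_diameter n S 2.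
Proof.
apply: (@circulant_has_diameter _ _ n_gt0 (@Sunion_lt _ _) 2 1) => [x | ss S_ss].
  have [a [b [Sa Sb sum_ab]]] := sum_two_squarefree x.
  by exists [:: a; b]; rewrite /= Sa Sb addn0.
have [q q_ps] : exists q, q \in ps.
  by case: ps ps_size => [|q qs] //; exists q; rewrite mem_head.
have q_pr := allP ps_prime q q_ps.
have lt_1n : 1 < n.
  by apply: leq_trans (prime_gt1 q_pr) (dvdn_leq n_gt0 _); rewrite prime_dvd_prod.
case: ss S_ss => [|s [|s' ss]] //=; first by rewrite mod0n modn_small.
rewrite andbT addn0 => Ss; rewrite !modn_small ?(Sunion_lt Ss) // => s1.
move: Ss; rewrite s1 => /hasP[p /(allP ps_prime) p_pr].
by rewrite /Gn gcd1n => /andP[_ /eqP p1]; rewrite -p1 in p_pr.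
Qed.

End SquarefreeModulus.

Section SquareModulus.

Variable ps : seq nat.
Hypotheses (ps_uniq : uniq ps) (ps_prime : all prime ps) (ps_odd : all odd ps).

Local Notation m := (\prod_(p <- ps) p).
Local Notation n := (2 * m ^ 2).
Local Notation S := (Sunion n [seq (m %/ q) ^ 2 | q <- ps]).

Let n_gt0 : 0 < n. Proof. by rewrite muln_gt0 expn_gt0 prod_primes_gt0. Qed.

Lemma divn_prod_cofactor q : q \in ps -> m %/ q = cofactor ps q.
Proof.
by move=> q_ps; rewrite (prod_cofactor ps_uniq q_ps) mulKn // prime_gt0 ?(allP ps_prime).
Qed.

Lemma cofactor_gt0 q : 0 < cofactor ps q.
Proof. by rewrite odd_gt0 // odd_prod. Qed.

Lemma Gn_squareE q s : q \in ps ->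
  Gn n ((m %/ q) ^ 2) s = [&& 0 < s < n, cofactor ps q ^ 2 %| s, odd s & ~~ (q %| s)].
Proof.
move=> q_ps; have q_pr := allP ps_prime q q_ps.
rewrite /Gn divn_prod_cofactor //; congr (_ && _).
rewrite (prod_cofactor ps_uniq q_ps) expnMn mulnA [_ * cofactor _ _ ^ 2]mulnC.
have cop : coprime (cofactor ps q ^ 2) (2 * q ^ 2).
  rewrite coprime_pexpl // coprimeMr coprimen2 odd_prod // coprime_pexpr //.
  by rewrite coprime_sym coprime_cofactor.
rewrite gcdn_mul_coprime_eq // coprimeMr coprimen2 coprime_pexpr //.
by rewrite coprime_sym prime_coprime.
Qed.

Lemma Gn_square_sq_dvdn q p s : q \in ps -> Gn n ((m %/ q) ^ 2) s ->
  p \in ps -> p != q -> p ^ 2 %| s.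
Proof.
move=> q_ps; rewrite Gn_squareE // => /and4P[_ dvd_c2s _ _] p_ps neq_pq.
by apply: dvdn_trans dvd_c2s; rewrite dvdn_exp2r // dvdn_cofactor.
Qed.

Lemma S_char s : S s ->
  [/\ odd s, count (fun q => ~~ (q %| s)) ps = 1 & {in ps, forall p, p %| s -> p ^ 2 %| s}].
Proof.
rewrite /Sunion has_map => /hasP[q q_ps /= Gs].
have p2_s := Gn_square_sq_dvdn q_ps Gs.
move: (Gs); rewrite Gn_squareE // => /and4P[_ _ odd_s Ndvd_qs].
split=> // [|p p_ps dvd_ps]; last by apply: p2_s => //; apply: contraNneq Ndvd_qs => <-.
rewrite -[1]/(nat_of_bool true) -q_ps -(count_uniq_mem q ps_uniq).
apply: eq_in_count => p p_ps /=; case: (eqVneq p q) => [-> // | neq_pq].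
by rewrite (dvdn_trans _ (p2_s p p_ps neq_pq)) // dvdn_exp.
Qed.

Lemma Gn_square_lift q u : q \in ps -> ~~ (q %| u) ->
  exists e, Gn n ((m %/ q) ^ 2) e /\ e = u %[mod q ^ 2].
Proof.
move=> q_ps Ndvd_qu; have q_pr := allP ps_prime q q_ps.
set c := cofactor ps q; have c_gt0 : 0 < c := cofactor_gt0 q.
have n_q2c2 : n = q ^ 2 * (2 * c ^ 2).
  by rewrite (prod_cofactor ps_uniq q_ps) expnMn mulnCA.
have cop : coprime (q ^ 2) (2 * c ^ 2).
  rewrite coprime_pexpl // coprimeMr coprime_pexpr // coprime_cofactor // andbT.
  by rewrite prime_coprime // dvdn_prime2 //; apply: contraTneq (allP ps_odd q q_ps) => ->.
set e := chinese (q ^ 2) (2 * c ^ 2) u (c ^ 2) %% n.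
have e_u : e = u %[mod q ^ 2].
  by rewrite modn_dvdm ?chinese_modl // n_q2c2 dvdn_mulr.
have e_c2 : e %% (2 * c ^ 2) = c ^ 2.
  rewrite /e modn_dvdm; last by rewrite n_q2c2 dvdn_mull.
  by rewrite chinese_modr // modn_small // ltn_Pmull // expn_gt0 c_gt0.
have e_eq : e = e %/ (2 * c ^ 2) * 2 * c ^ 2 + c ^ 2.
  by rewrite {1}(divn_eq e (2 * c ^ 2)) e_c2 mulnA.
exists e; split=> //; rewrite Gn_squareE // ltn_pmod // andbT.
apply/and4P; split.
- by rewrite lt0n; apply: contra_eqN e_c2 => /eqP->; rewrite mod0n eq_sym -lt0n expn_gt0 c_gt0.
- by rewrite e_eq dvdn_addr // dvdn_mull.
- by rewrite e_eq oddD !oddM andbF /= andbb odd_prod.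
- have dvd_q_q2 : q %| q ^ 2 by rewrite dvdn_exp.
  by rewrite /dvdn -(modn_dvdm e dvd_q_q2) e_u modn_dvdm.
Qed.

Lemma Gn_square_Sunion q s : q \in ps -> Gn n ((m %/ q) ^ 2) s -> S s.
Proof. by move=> q_ps Gs; rewrite /Sunion has_map; apply/hasP; exists q. Qed.

Lemma Gn_square_pair_sum q y : q \in ps ->
  exists e1 e2, [/\ Gn n ((m %/ q) ^ 2) e1, Gn n ((m %/ q) ^ 2) e2 & e1 + e2 = y %[mod q ^ 2]].
Proof.
move=> q_ps; have q_pr := allP ps_prime q q_ps.
have gt2q : 2 < q by rewrite odd_prime_gt2 ?(allP ps_odd).
have q2_gt0 : 0 < q ^ 2 by rewrite expn_gt0 prime_gt0.
have dvd_q_q2 : q %| q ^ 2 by rewrite dvdn_exp.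
have [u [v [Ndvd_qu Ndvd_qv sum_uv]]] := sum_two_nonmultiples y gt2q q2_gt0 dvd_q_q2.
have [e1 [G1 e1_u]] := Gn_square_lift q_ps Ndvd_qu.
have [e2 [G2 e2_v]] := Gn_square_lift q_ps Ndvd_qv.
by exists e1, e2; split=> //; rewrite -modnDm e1_u e2_v modnDm.
Qed.

Lemma sum_pairs_mod_sq L y : uniq L -> {subset L <= ps} ->
  exists ss, [/\ size ss = 2 * size L, all S ss &
    {in ps, forall p, sumn ss = (if p \in L then y else 0) %[mod p ^ 2]}].
Proof.
elim: L => [|q L IHL] /=; first by exists [::].
case/andP=> qNL L_uniq sub_qL_ps.
have q_ps : q \in ps by apply: sub_qL_ps; rewrite mem_head.
have [|ss [size_ss S_ss sum_ss]] := IHL L_uniq.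
  by move=> p p_L; apply: sub_qL_ps; rewrite inE p_L orbT.
have [e1 [e2 [G1 G2 sum_e]]] := Gn_square_pair_sum y q_ps.
exists [:: e1, e2 & ss]; split=> /=; first by rewrite size_ss mulnS.
  by rewrite (Gn_square_Sunion q_ps G1) (Gn_square_Sunion q_ps G2).
move=> p p_ps; rewrite addnA -modnDm sum_ss // [p \in q :: L]in_cons.
case: (eqVneq p q) => [-> | neq_pq] /=.
  by rewrite (negbTE qNL) mod0n addn0 modn_mod sum_e.
have /eqP e1_0 := Gn_square_sq_dvdn q_ps G1 p_ps neq_pq.
have /eqP e2_0 := Gn_square_sq_dvdn q_ps G2 p_ps neq_pq.
by rewrite -[(e1 + e2) %% _]modnDm e1_0 e2_0 mod0n add0n modn_mod.
Qed.

Lemma S_odd s : S s -> odd s.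
Proof. by case/S_char. Qed.

Lemma sum_even_residue y : ~~ odd y ->
  exists ss, [/\ size ss = 2 * size ps, all S ss & sumn ss = y %[mod n]].
Proof.
move=> even_y.
have [ss [size_ss S_ss sum_ss]] := sum_pairs_mod_sq y ps_uniq (fun p p_ps => p_ps).
exists ss; split=> //; apply/eqP.
rewrite chinese_remainder ?coprime2n ?oddX ?odd_prod ?orbT //; apply/andP; split.
  by rewrite !modn2 odd_sumn ?size_ss ?oddM ?(negbTE even_y) // (sub_all S_odd S_ss).
by apply/eqP/eqn_mod_prod_primes_exp => // p p_ps; rewrite sum_ss ?p_ps.
Qed.

Lemma sum_upper_bound x : 0 < size ps ->
  exists ss, [/\ size ss <= 2 * size ps + 1, all S ss & sumn ss = x %[mod n]].
Proof.
move=> ps_size; have [even_x | odd_x] := boolP (~~ odd x).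
  have [ss [size_ss S_ss sum_ss]] := sum_even_residue even_x.
  by exists ss; rewrite size_ss leq_addr.
have [q q_ps] : exists q, q \in ps.
  by case: ps ps_size => // q qs _; exists q; rewrite mem_head.
have Ndvd_q1 : ~~ (q %| 1) by rewrite dvdn1; apply: contraTneq (allP ps_prime q q_ps) => ->.
have [e [/(Gn_square_Sunion q_ps) Se _]] := Gn_square_lift q_ps Ndvd_q1.
have le_en : e <= n := ltnW (Sunion_lt Se).
have even_y : ~~ odd (x + (n - e)).
  by rewrite oddD oddB // oddM /= (S_odd Se) (negPn odd_x).
have [ss [size_ss S_ss sum_ss]] := sum_even_residue even_y.
exists (e :: ss); split=> /=; [by rewrite size_ss addn1 | by rewrite Se |].
by rewrite -modnDmr sum_ss modnDmr addnCA (subnKC le_en) modnDr.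
Qed.

Lemma count_nondvd_gt1 q ss : q \in ps -> all S ss -> sumn ss = m %[mod n] ->
  1 < count (fun s => ~~ (q %| s)) ss.
Proof.
move=> q_ps S_ss sum_ss; have q_pr := allP ps_prime q q_ps.
have dvd_q_q2 : q %| q ^ 2 by rewrite dvdn_exp.
have dvd_q2n : q ^ 2 %| n by rewrite dvdn_mull // dvdn_exp2r // prime_dvd_prod.
have Ndvd_q2m : ~~ (q ^ 2 %| m).
  rewrite (prod_cofactor ps_uniq q_ps) -mulnn dvdn_pmul2l ?prime_gt0 //.
  by rewrite -prime_coprime // coprime_cofactor.
rewrite -size_filter; set A := [seq s <- ss | ~~ (q %| s)].
have Ndvd_A : all (fun s => ~~ (q %| s)) A by apply: filter_all.
have sum_A : sumn A = m %[mod q ^ 2].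
  set B := [seq s <- ss | predC (fun s => ~~ (q %| s)) s].
  have /eqP sum_B : q ^ 2 %| sumn B.
    rewrite sumnE big_filter big_seq_cond; apply: dvdn_sum => s /andP[s_ss /negPn dvd_qs].
    by have [_ _ ->] := S_char (allP S_ss s s_ss).
  rewrite -(modn_dvdm m dvd_q2n) -sum_ss modn_dvdm //.
  have perm_AB : perm_eq (A ++ B) ss by rewrite perm_filterC.
  by rewrite -(perm_sumn perm_AB) sumn_cat -modnDmr sum_B addn0.
case: A Ndvd_A sum_A => [|e [|e' A]] //= => [_ m_0 | /andP[Ndvd_qe _]].
  by move: Ndvd_q2m; rewrite /dvdn -m_0 mod0n eqxx.
rewrite addn0 => e_m; move: Ndvd_qe.
by rewrite /dvdn -(modn_dvdm e dvd_q_q2) e_m modn_dvdm // -/(dvdn q m) prime_dvd_prod ?q_ps.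
Qed.

Lemma sum_lower_bound ss : all S ss -> sumn ss = m %[mod n] -> 2 * size ps + 1 <= size ss.
Proof.
move=> S_ss sum_ss.
have count1 : {in ss, forall s, count (fun q => ~~ (q %| s)) ps = 1}.
  by move=> s s_ss; case: (S_char (allP S_ss s s_ss)).
have ge_2r : 2 * size ps <= size ss.
  rewrite -(@sum_count_eq1 _ _ ps ss (fun q s => ~~ (q %| s)) count1) -sum1_size big_distrr /=.
  by rewrite !big_seq; apply: leq_sum => q q_ps; rewrite muln1 count_nondvd_gt1.
have odd_size : odd (size ss).
  have sum_2 : sumn ss = m %[mod 2].
    have dvd_2n : 2 %| n by rewrite dvdn_mulr.
    by rewrite -(modn_dvdm (sumn ss) dvd_2n) sum_ss modn_dvdm.
  move: sum_2; rewrite -odd_sumn ?(sub_all S_odd S_ss) // !modn2 odd_prod //.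
  by case: (odd (sumn ss)).
rewrite addn1 ltn_neqAle ge_2r andbT.
by apply: contraTneq odd_size => <-; rewrite oddM.
Qed.

Lemma diameter_square : 0 < size ps -> has_diameter n S (2 * size ps + 1).
Proof.
move=> ps_size; apply: (@circulant_has_diameter _ _ n_gt0 (@Sunion_lt _ _) _ m) => [x | ss].
  exact: sum_upper_bound.
exact: sum_lower_bound.
Qed.

End SquareModulus.

Theorem theorem5 :
  (forall ps : seq nat,
      3 <= size ps -> uniq ps -> all prime ps -> all odd ps ->
      let n := \prod_(q <- ps) q in
      has_diameter n (Sunion n ps) 2) /\
  (forall ps : seq nat,
      0 < size ps -> uniq ps -> all prime ps -> all odd ps ->
      let m := \prod_(q <- ps) q in
      let n := 2 * m ^ 2 in
      let D := [seq (m %/ q) ^ 2 | q <- ps] in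
      has_diameter n (Sunion n D) (2 * size ps + 1)).
Proof.
split=> ps size_ps ps_uniq ps_prime ps_odd.
  exact: diameter_squarefree (ltnW size_ps).
exact: diameter_square.
Qed.
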